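(* Let $X$ be a Polish space, let $\Lambda$ be a Borel subset of $X$, and let $T_1,T_2$ be continuous self-maps of $X$. Assume that for every compact set $K\subseteq X$ with $K\cap\Lambda=\emptyset$ there exists an infinite set $I\subseteq\mathbb N$ such that no point $x\in X$ belongs to $T_1^{-n}(K)\cap T_2^{-n}(K)$ for infinitely many $n\in I$. Then, whenever $m_1$ is a $T_1$-invariant Borel probability measure on $X$ and $m_2$ is a $T_2$-invariant Borel probability measure on $X$ with $m_1(\Lambda)=0=m_2(\Lambda)$, the measures $m_1$ and $m_2$ are mutually singular.
   Context: A Borel probability measure $m$ is $T$-invariant if $m(T^{-1}(A))=m(A)$ for every Borel set $A$. *)

From HB Require Import structures.
From mathcomp Require Import all_boot all_order all_algebra.
From mathcomp Require Import all_classical all_reals all_analysis.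
Set Implicit Arguments. Unset Strict Implicit. Unset Printing Implicit Defensive.
Import Order.TTheory GRing.Theory Num.Theory.
Local Open Scope classical_set_scope.
Local Open Scope ring_scope.

(* We take the space together with a chosen compatible complete metric
   (a complete (pseudo)metric space whose topology is the metric one),
   and require it to be Hausdorff (so the pseudometric is a metric)
   and separable (it has a countable dense subset). *)
Definition polish_space (R : realType) (X : completePseudoMetricType R) : Prop :=
  hausdorff_space X /\ exists D : set X, countable D /\ dense D.

Definition borel (X : ptopologicalType) := g_sigma_algebraType (@open X).

Definition invariant_measure (R : realType) (X : ptopologicalType)
    (T : X -> X) (m : probability (borel X) R) : Prop :=
  forall A : set (borel X), measurable A -> m (T @^-1` A) = m A.

Definition mutually_singular (R : realType) (X : ptopologicalType)
    (m1 m2 : probability (borel X) R) : Prop :=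
  exists A : set (borel X), [/\ measurable A, m1 A = 0%E & m2 (~` A) = 0%E].

From HB Require Import structures.
From mathcomp Require Import all_boot all_order all_algebra.
From mathcomp Require Import all_classical all_reals all_analysis.
From mathcomp Require Import lra.
Import Order.TTheory GRing.Theory Num.Theory.
Local Open Scope classical_set_scope.
Local Open Scope ring_scope.

(* Let N be the negative set of a Hahn decomposition of m1 - m2, so that
   m2 <= m1 below ~N and m1 <= m2 below N.  We show m2 (~N) = 0 = m1 N: two
   instances of one claim, with (T1, m1) and (T2, m2) exchanged.
   So let m2 <= m1 below P, and e > 0.  Tightness and inner regularity give a
   compact K disjoint from Lambda with m1 (~K) <= e and m2 (~K) <= e.  With
   A_n = T1^-n K /\ T2^-n K, invariance gives
     m2 P <= m2 (P /\ A_n) + m1 (~K) + m2 (~K),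
   since the part of P that T1^n sends out of K has m2-measure at most its
   m1-measure.  No point lies in infinitely many A_n with n in I, so the sets
   P /\ \bigcup_(n in I, n >= M) A_n decrease to the empty set, and
   m2 P <= 3 e. *)

Section measure_lemmas.
Context {d} {T : measurableType d} {R : realType}.

Lemma nonincreasing_bigcap0_measure_lt (mu : {finite_measure set T -> \bar R})
    (A : (set T)^nat) (e : R) :
  0 < e -> (forall n, measurable (A n)) -> nonincreasing_seq A ->
  \bigcap_n A n = set0 -> exists n, (mu (A n) < e%:E)%E.
Proof.
move=> e0 mA nA A0.
have muA0 : (mu (A 0%N) < +oo)%E by rewrite ltey_eq fin_num_measure.
have := nonincreasing_cvg_mu muA0 mA _ nA; rewrite A0 measure0 => /(_ measurable0).
move=> /(_ _ (@nbhs_open_ereal_lt R 0 (fun=> e) e0)) [N _ muA].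
by exists N; apply: muA => /=.
Qed.

Lemma measure_bigcupD_lt (mu : {finite_measure set T -> \bar R})
    (F : (set T)^nat) (e : R) :
  0 < e -> (forall k, measurable (F k)) ->
  exists N, (mu (\bigcup_k F k `\` \bigcup_(k in `I_N) F k) < e%:E)%E.
Proof.
move=> e0 mF; apply: nonincreasing_bigcap0_measure_lt => //.
- move=> N; apply: measurableD; first exact: bigcupT_measurable.
  by apply: bigcup_measurable => k _; exact: mF.
- move=> N M NM; rewrite subsetEset; apply: setDS => x [k /= kN Fkx].
  by exists k => //=; exact: leq_trans kN NM.
- apply/seteqP; split=> // x FG; have [[k _ Fkx] _] := FG 0%N I.
  by have [_] := FG k.+1 I; apply; exists k => /=.
Qed.

Lemma measure_le_epsilon_cover (mu : {measure set T -> \bar R})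
    (G : (set T)^nat) (A : set T) (e : R) :
  0 <= e -> measurable A -> (forall k, measurable (G k)) ->
  A `<=` \bigcup_k G k -> (forall k, (mu (G k) <= (e / (2 ^ k.+1)%:R)%:E)%E) ->
  (mu A <= e%:E)%E.
Proof.
move=> e0 mA mG AG muG.
apply: le_trans (measure_sigma_subadditive _ mG mA AG) _.
apply: le_trans (epsilon_trick0 xpredT e0).
by apply: lee_nneseries => // k _; exact: muG.
Qed.

Lemma Hahn_decomposition_finite_measures
    (m1 m2 : {finite_measure set T -> \bar R}) :
  exists N, [/\ measurable N,
    forall A, measurable A -> A `<=` ~` N -> (m2 A <= m1 A)%E &
    forall A, measurable A -> A `<=` N -> (m1 A <= m2 A)%E].
Proof.
pose nu := cadd (charge_of_finite_measure m1) (copp (charge_of_finite_measure m2)).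
have [P [N [[_ posP] [mN negN] PN _]]] := Hahn_decomposition nu.
have fin2 A : measurable A -> m2 A \is a fin_num by exact: fin_num_measure.
exists N; split => // A mA AN.
- have AP : A `<=` P.
    move=> x Ax; have : (P `|` N) x by rewrite PN.
    by case=> // /(AN x Ax).
  by have := posP A mA AP; rewrite /nu /= sube_ge0 ?fin2.
- by have := negN A mA AN; rewrite /nu /= sube_le0 ?fin2.
Qed.

End measure_lemmas.

Lemma finite_set_nat_bounded {S : set nat} :
  finite_set S -> exists M, forall n, S n -> (n < M)%N.
Proof.
move=> /finite_fsetP[F ->]; exists (\max_(i <- finmap.enum_fset F) i).+1 => n /= nF.
by rewrite ltnS; exact: (@leq_bigmax_seq _ _ xpredT id n nF isT).
Qed.

Lemma infinite_set_nat_unbounded {I : set nat} :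
  infinite_set I -> forall M, exists2 n, I n & (M <= n)%N.
Proof.
move=> infI M; apply: contrapT => noIM; apply/infI/(sub_finite_set _ (finite_II M)).
by move=> n In; rewrite /= ltnNge; apply/negP => Mn; apply: noIM; exists n.
Qed.

Lemma bigcap_bigcup_ge_finite_eq0 (T : Type) (I : set nat) (A : (set T)^nat) :
  (forall x, finite_set [set n | I n /\ A n x]) ->
  \bigcap_M \bigcup_(n in [set n | I n /\ (M <= n)%N]) A n = set0.
Proof.
move=> finA; apply/seteqP; split=> // x Ax.
have [M boundM] := finite_set_nat_bounded (finA x).
have [n [In Mn] Anx] := Ax M Logic.I.
by have := boundM n (conj In Anx); rewrite ltnNge Mn.
Qed.

Lemma ultra_bigcup_lt (T : Type) (F : set_system T) (A : (set T)^nat) N :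
  UltraFilter F -> F (\bigcup_(k in `I_N) A k) -> exists2 k, (k < N)%N & F (A k).
Proof.
move=> uF; have PF : ProperFilter F := @ultra_proper _ F uF.
elim: N => [|N IH] FA.
  by exfalso; apply: (filter_not_empty F); apply: filterS FA => y [].
have [FAN|FnAN] := in_ultra_setVsetC (A N) uF; first by exists N.
have [|k kN FAk] := IH; last by exists k => //; exact: ltnW.
apply: filterS (filterI FA FnAN) => y [[k /= kN Aky] nANy]; exists k => //=.
by move: kN; rewrite ltnS leq_eqVlt => /orP[/eqP kN|//]; rewrite kN in Aky.
Qed.

Lemma continuous_iter (T : topologicalType) (f : T -> T) n :
  continuous f -> continuous (iter n f).
Proof.
move=> cf; elim: n => [|n IH] x /=; first exact: cvg_id.
exact: continuous_comp (IH x) (cf _).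
Qed.

Lemma dense_seq {X : ptopologicalType} {D : set X} : countable D -> dense D ->
  exists f : nat -> X, dense (range f).
Proof.
by move=> /pfcard_geP[-> /dense0|/surjfunPex[f ->]]; last exists f.
Qed.

Section borel_lemmas.
Context {X : ptopologicalType}.

Lemma open_borel_measurable (A : set X) : open A -> measurable (A : set (borel X)).
Proof. exact: sub_sigma_algebra. Qed.

Lemma closed_borel_measurable (A : set X) : closed A -> measurable (A : set (borel X)).
Proof.
move=> cA; rewrite -(setCK A); apply: measurableC.
by apply: open_borel_measurable; exact: closed_openC.
Qed.

Lemma invariant_measure_iter_open {R : realType} {T : X -> X}
    {m : probability (borel X) R} :
  continuous T -> invariant_measure T m ->
  forall n (A : set X), open A -> m (iter n T @^-1` A) = m A.
Proof.
move=> cT mT; elim=> [//|n IH] A oA /=.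
have oTA : open (T @^-1` A) by apply: open_comp => // x _; exact: cT.
by rewrite -[RHS](mT A (open_borel_measurable _ oA)) -(IH _ oTA).
Qed.

End borel_lemmas.

Section pseudometric_lemmas.
Context {R : realType}.

Lemma dense_range_ball {X : pseudoPMetricType R} {f : nat -> X} :
  dense (range f) -> forall x (r : R), 0 < r -> exists k, ball (f k) r x.
Proof.
move=> df x r r0.
have [z [xz [k _ fkz]]] := df _ (ex_intro _ x (nbhsx_ballx x r r0))
  (@open_interior _ (ball x r)).
by exists k; rewrite fkz; apply: ball_sym; exact: interior_subset.
Qed.

Lemma closed_ball_sub_ball {X : pseudoMetricType R} (x : X) (e : R) :
  0 < e -> closed_ball x e `<=` ball x (2 * e).
Proof.
move=> e0 y /(_ _ (nbhsx_ballx y e e0))[z [xz yz]].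
by rewrite mulr_natl mulr2n; exact: ball_triangle xz (ball_sym yz).
Qed.

Lemma closed_totally_bounded_compact {X : completePseudoMetricType R} (K : set X) :
  closed K ->
  (forall e : R, 0 < e ->
     exists N (c : nat -> X), K `<=` \bigcup_(k in `I_N) ball (c k) e) ->
  compact K.
Proof.
move=> cK tbK; rewrite compact_ultra => F uF FK.
have PF : ProperFilter F := @ultra_proper _ F uF.
have cF : cauchy F.
  apply/cauchy_ballP => e e0.
  have [N [c Kc]] := tbK (e / 2) (divr_gt0 e0 (ltr0Sn _ 1)).
  have [k _ Fk] := @ultra_bigcup_lt _ F _ _ uF (filterS Kc FK).
  exists (ball (c k) (e / 2), ball (c k) (e / 2)) => //= -[x y] /= [xk yk].
  by rewrite [e]splitr; exact: ball_triangle (ball_sym xk) yk.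
have FF := @cauchy_cvg _ F PF cF.
by exists (lim F); split => //; exact: (@closed_cvg _ _ F PF id K cK FK _ FF).
Qed.

End pseudometric_lemmas.

Lemma probability_tight {R : realType} {X : completePseudoMetricType R}
    (P : probability (borel X) R) {D : set X} :
  countable D -> dense D ->
  forall e : R, 0 < e -> exists K, [/\ closed K, compact K & (P (~` K) <= e%:E)%E].
Proof.
move=> cD dD e e0; have [f df] := dense_seq cD dD.
pose r j : R := j.+1%:R^-1.
have r0 j : 0 < r j by rewrite invr_gt0.
pose C j N := \bigcup_(k in `I_N) closed_ball (f k) (r j).
have cC j N : closed (C j N).
  by apply: closed_bigcup => // k _; exact: closed_ball_closed.
have CN j : exists N, (P (~` C j N) < (e / (2 ^ j.+1)%:R)%:E)%E.
  apply: nonincreasing_bigcap0_measure_lt.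
  - by rewrite divr_gt0 // ltr0n expn_gt0.
  - by move=> N; apply: open_borel_measurable; exact: closed_openC.
  - move=> N M NM; rewrite subsetEset; apply: subsetC => x [k /= kN kx].
    by exists k => //=; exact: leq_trans kN NM.
  - apply/seteqP; split=> // x Cx.
    have [k kx] := dense_range_ball df x _ (r0 j).
    by apply: (Cx k.+1 I); exists k => //=; exact: subset_closure.
have /choice [N HN] := CN.
have cK : closed (\bigcap_j C j (N j)) by exact: closed_bigI.
exists (\bigcap_j C j (N j)); split => //.
- apply: closed_totally_bounded_compact => // eps eps0.
  have [|j] := @ltr_add_invr R 0 (eps / 2); first by rewrite divr_gt0.
  rewrite add0r => rj; exists (N j), f => x /(_ j I)[k kN kx]; exists k => //.
  apply: (@le_ball _ _ _ (2 * r j)); last exact: closed_ball_sub_ball (r0 j) _ kx.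
  by rewrite /r; set t := j.+1%:R^-1 in rj *; lra.
- apply: (measure_le_epsilon_cover P (fun j => ~` C j (N j)) _ _ (ltW e0)).
  + by apply: open_borel_measurable; exact: closed_openC.
  + by move=> j; apply: open_borel_measurable; exact: closed_openC.
  + by rewrite setC_bigcap; exact: subset_refl.
  + by move=> j; exact/ltW/HN.
Qed.

Section closed_regularity.
Context {R : realType} {X : pseudoPMetricType R}.
Variable mu : {finite_measure set (borel X) -> \bar R}.

Definition closed_open_regular (A : set X) := forall e : R, 0 < e ->
  exists F U, [/\ closed F, open U, F `<=` A, A `<=` U & (mu (U `\` F) <= e%:E)%E].

Lemma closed_open_regular0 : closed_open_regular set0.
Proof.
move=> e e0; exists set0, set0; split => //; [exact: closed0 | exact: open0 |].
by rewrite setD0 measure0 lee_fin ltW.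
Qed.

Lemma closed_open_regularC (A : set X) :
  closed_open_regular A -> closed_open_regular (~` A).
Proof.
move=> rA e e0; have [F [U [cF oU FA AU muUF]]] := rA e e0.
exists (~` U), (~` F); split; [exact: open_closedC | exact: closed_openC | | |].
- exact: subsetC.
- exact: subsetC.
- by rewrite setDE setCK setIC.
Qed.

Lemma closed_open_regular_open (U : set X) : open U -> closed_open_regular U.
Proof.
move=> oU e e0.
have invS_gt0 n : 0 < n.+1%:R^-1 :> R by rewrite invr_gt0.
pose F n := closure [set x | ball x n.+1%:R^-1 `<=` U].
have FU n : F n `<=` U.
  by move=> y /(_ _ (nbhsx_ballx y _ (invS_gt0 n)))[z [zU yz]]; exact/zU/ball_sym.
have [n muUF] : exists n, (mu (U `\` F n) < e%:E)%E.
  apply: nonincreasing_bigcap0_measure_lt => //.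
  - move=> n; apply: measurableD; first exact: open_borel_measurable.
    by apply: closed_borel_measurable; exact: closed_closure.
  - move=> n m nm; rewrite subsetEset; apply: setDS; apply: closureS => x xU.
    by apply: subset_trans xU; apply: le_ball; rewrite lef_pV2 ?posrE // ler_nat.
  - apply/seteqP; split=> // x Ux; have [Ux0 _] := Ux 0%N I.
    have /nbhs_ballP[r r0 rU] : nbhs x U by move: oU; rewrite openE => /(_ x Ux0).
    have [n] := @ltr_add_invr R 0 r r0; rewrite add0r => nr.
    have [_] := Ux n I; apply; apply: subset_closure.
    by apply: subset_trans rU; exact/le_ball/ltW.
by exists (F n), U; split => //; [exact: closed_closure | exact: ltW].
Qed.

Lemma closed_open_regular_bigcup (A : (set X)^nat) :
  (forall k, closed_open_regular (A k)) -> closed_open_regular (\bigcup_k A k).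
Proof.
move=> rA e e0; have e20 : 0 < e / 2 by rewrite divr_gt0.
have /choice[F /choice[U hFU]] : forall k, exists F U,
    [/\ closed F, open U, F `<=` A k, A k `<=` U &
        (mu (U `\` F) <= (e / 2 / (2 ^ k.+1)%:R)%:E)%E].
  by move=> k; apply: rA; rewrite divr_gt0 // ltr0n expn_gt0.
have cF k : closed (F k) by have [] := hFU k.
have oU : open (\bigcup_k U k) by apply: bigcup_open => k _; have [] := hFU k.
have mF k : measurable (F k : set (borel X)) by exact: closed_borel_measurable.
have mUF k : measurable (U k `\` F k : set (borel X)).
  have [_ oUk _ _ _] := hFU k; apply: measurableD => //.
  exact: open_borel_measurable.
have [N muFG] := measure_bigcupD_lt mu _ _ e20 mF.
pose G := \bigcup_(k in `I_N) F k.
have mG : measurable (G : set (borel X)).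
  by apply: closed_borel_measurable; exact: closed_bigcup.
exists G, (\bigcup_k U k); split => //; first exact: closed_bigcup.
- by move=> x [k _ Fkx]; exists k => //; have [_ _ + _ _] := hFU k; apply.
- by move=> x [k _ Akx]; exists k => //; have [_ _ _ + _] := hFU k; apply.
have UG : \bigcup_k U k `\` G `<=` (\bigcup_k F k `\` G) `|` \bigcup_k (U k `\` F k).
  move=> x [[k _ Ukx] nGx]; have [Fkx|nFkx] := pselect (F k x).
  + by left; split => //; exists k.
  + by right; exists k.
have mFG : measurable (\bigcup_k F k `\` G : set (borel X)).
  by apply: measurableD => //; exact: bigcupT_measurable.
apply: (le_trans (le_measure mu _ _ UG)); rewrite ?inE.
- by apply: measurableD => //; exact: open_borel_measurable.
- by apply: measurableU => //; exact: bigcupT_measurable.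
apply: (le_trans (measureU2 _ _ _)) => //; first exact: bigcupT_measurable.
rewrite [e]splitr EFinD; apply: leeD; first exact: ltW.
apply: (measure_le_epsilon_cover mu _ _ _ (ltW e20) _ mUF) => //.
- exact: bigcupT_measurable.
- by move=> k; have [] := hFU k.
Qed.

Lemma measurable_closed_open_regular (A : set X) :
  measurable (A : set (borel X)) -> closed_open_regular A.
Proof.
apply: smallest_sub; last by move=> U; exact: closed_open_regular_open.
split; [exact: closed_open_regular0 | | exact: closed_open_regular_bigcup].
by move=> B; rewrite setTD; exact: closed_open_regularC.
Qed.

End closed_regularity.

Lemma compact_avoiding_null_set {R : realType} {X : completePseudoMetricType R}
    (P : probability (borel X) R) {D L : set X} :
  countable D -> dense D -> measurable (L : set (borel X)) -> P L = 0%E ->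
  forall e : R, 0 < e ->
  exists K, [/\ closed K, compact K, K `&` L = set0 & (P (~` K) <= e%:E)%E].
Proof.
move=> cD dD mL PL0 e e0; have e20 : 0 < e / 2 by rewrite divr_gt0.
have [K0 [cK0 kK0 PK0]] := probability_tight P cD dD _ e20.
have [F [U [cF oU FL LU PUF]]] :=
  measurable_closed_open_regular P _ (measurableC mL) _ e20.
exists (K0 `&` F); split.
- exact: closedI.
- exact: compact_closedI.
- by apply/seteqP; split=> // x [[_ /FL]].
have mUF : measurable (U `\` F : set (borel X)).
  apply: measurableD; first exact: open_borel_measurable.
  exact: closed_borel_measurable.
have cover : ~` (K0 `&` F) `<=` ~` K0 `|` (L `|` (U `\` F)).
  rewrite setCI => x [nK0x|nFx]; [by left | right].
  by have [Lx|/LU Ux] := pselect (L x); [left | right].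
apply: (le_trans (le_measure P _ _ cover)); rewrite ?inE.
- by apply: open_borel_measurable; apply: closed_openC; exact: closedI.
- apply: measurableU; first by apply: open_borel_measurable; exact: closed_openC.
  exact: measurableU.
apply: (le_trans (measureU2 _ _ _)).
- by apply: open_borel_measurable; exact: closed_openC.
- exact: measurableU.
rewrite [e]splitr EFinD; apply: leeD => //.
apply: (le_trans (measureU2 _ _ _)) => //.
(* [P L] is not syntactically the term of [PL0]: [P] is applied through a
   different coercion path. *)
by change (P L + P (U `\` F) <= (e / 2)%:E)%E; rewrite PL0 add0e.
Qed.

Definition joint_visits {T : Type} (T1 T2 : T -> T) (K : set T) (I : set nat) (x : T) :=
  [set n | I n /\ K (iter n T1 x) /\ K (iter n T2 x)].

Lemma joint_visitsC {T : Type} (T1 T2 : T -> T) K I x :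
  joint_visits T1 T2 K I x = joint_visits T2 T1 K I x.
Proof. by apply/seteqP; split=> n /= [In [K1 K2]]. Qed.

Section dominated_null.
Context {R : realType} {X : ptopologicalType}.
Context {T1 T2 : X -> X} {m1 m2 : probability (borel X) R}.
Hypotheses (cT1 : continuous T1) (cT2 : continuous T2).
Hypotheses (m1T1 : invariant_measure T1 m1) (m2T2 : invariant_measure T2 m2).

Let open_preimage_iter (T : X -> X) n (A : set X) :
  continuous T -> open A -> open (iter n T @^-1` A).
Proof. by move=> cT oA; apply: open_comp => // x _; exact: continuous_iter. Qed.

Lemma dominated_le_joint_visit (P B : set (borel X)) (K : set X) n :
  measurable P -> measurable B -> closed K ->
  (forall A, measurable A -> A `<=` P -> (m2 A <= m1 A)%E) ->
  iter n T1 @^-1` K `&` iter n T2 @^-1` K `<=` B ->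
  (m2 P <= m2 (P `&` B) + (m1 (~` K) + m2 (~` K)))%E.
Proof.
move=> mP mB cK m21 KB.
have oK : open (~` K) by exact: closed_openC.
have mK1 : measurable ((iter n T1 @^-1` ~` K) : set (borel X)).
  by apply: open_borel_measurable; exact: open_preimage_iter.
have mK2 : measurable ((iter n T2 @^-1` ~` K) : set (borel X)).
  by apply: open_borel_measurable; exact: open_preimage_iter.
have cover : P `<=` (P `&` B) `|` ((P `&` iter n T1 @^-1` ~` K) `|` iter n T2 @^-1` ~` K).
  move=> x Px; have [Bx|nBx] := pselect (B x); first by left.
  have [K1x|nK1x] := pselect (K (iter n T1 x)); last by right; left.
  have [K2x|nK2x] := pselect (K (iter n T2 x)); last by right; right.
  by exfalso; apply/nBx/KB.
have mPB : measurable (P `&` B) by exact: measurableI.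
have mPK1 : measurable (P `&` iter n T1 @^-1` ~` K) by exact: measurableI.
apply: (le_trans (le_measure m2 _ _ cover)); rewrite ?inE //.
  by apply: measurableU => //; exact: measurableU.
apply: (le_trans (measureU2 _ _ _)) => //; first exact: measurableU.
apply: leeD => //; apply: (le_trans (measureU2 _ _ _)) => //; apply: leeD.
- apply: le_trans (m21 _ mPK1 (@subIsetl _ _ _)) _.
  apply: le_trans (le_measure m1 _ _ (@subIsetr _ P _)) _; rewrite ?inE //.
  by rewrite -[X in (_ <= X)%E](invariant_measure_iter_open cT1 m1T1 n _ oK).
- by rewrite -[X in (_ <= X)%E](invariant_measure_iter_open cT2 m2T2 n _ oK).
Qed.

Lemma dominated_null (P : set (borel X)) : measurable P ->
  (forall A, measurable A -> A `<=` P -> (m2 A <= m1 A)%E) ->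
  (forall e : R, 0 < e -> exists K I, [/\ closed K, (m1 (~` K) <= e%:E)%E,
     (m2 (~` K) <= e%:E)%E, infinite_set I &
     forall x, finite_set (joint_visits T1 T2 K I x)]) ->
  m2 P = 0%E.
Proof.
move=> mP m21 smallK; apply/eqP; rewrite eq_le measure_ge0 andbT.
apply/lee_addgt0Pr => e e0; rewrite add0e.
have e30 : 0 < e / 3 by rewrite divr_gt0.
have [K [I [cK m1K m2K infI finI]]] := smallK _ e30.
pose A n := iter n T1 @^-1` K `&` iter n T2 @^-1` K.
have cA n : closed (A n).
  by apply: closedI; apply: preimage_closed => // x _; exact: continuous_iter.
pose B M := \bigcup_(n in [set n | I n /\ (M <= n)%N]) A n.
have mB M : measurable (B M : set (borel X)).
  by apply: bigcup_measurable => n _; exact: closed_borel_measurable.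
have [M m2PB] : exists M, (m2 (P `&` B M) < (e / 3)%:E)%E.
  apply: nonincreasing_bigcap0_measure_lt => //.
  - by move=> M; exact: measurableI.
  - move=> M M' MM'; rewrite subsetEset; apply: setIS => x [n [In M'n] Anx].
    by exists n => //; split => //; exact: leq_trans MM' M'n.
  - rewrite -subset0 => x PBx.
    rewrite -(@bigcap_bigcup_ge_finite_eq0 _ I A finI).
    by move=> M _; have [] := PBx M Logic.I.
have [n In Mn] := infinite_set_nat_unbounded infI M.
have AB : A n `<=` B M by move=> x Anx; exists n.
apply: le_trans (dominated_le_joint_visit _ _ _ n mP (mB M) cK m21 AB) _.
have -> : e = e / 3 + (e / 3 + e / 3) by lra.
by rewrite !EFinD; apply: leeD; [exact: ltW m2PB | exact: leeD].
Qed.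

End dominated_null.

Theorem theorem3p2 (R : realType) (X : completePseudoMetricType R)
  (Lambda : set X) (T1 T2 : X -> X) :
  polish_space X ->
  measurable (Lambda : set (borel X)) ->
  continuous T1 -> continuous T2 ->
  (forall K : set X, compact K -> K `&` Lambda = set0 ->
     exists I : set nat, infinite_set I /\
       forall x : X,
         finite_set [set n | I n /\ K (iter n T1 x) /\ K (iter n T2 x)]) ->
  forall (m1 m2 : probability (borel X) R),
    invariant_measure T1 m1 -> invariant_measure T2 m2 ->
    m1 Lambda = 0%E -> m2 Lambda = 0%E ->
    mutually_singular m1 m2.
Proof.
move=> [_ [D [cD dD]]] mL cT1 cT2 rare m1 m2 m1T1 m2T2 m1L m2L.
have smallK e : 0 < e -> exists K I, [/\ closed K, (m1 (~` K) <= e%:E)%E,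
    (m2 (~` K) <= e%:E)%E, infinite_set I &
    forall x, finite_set (joint_visits T1 T2 K I x)].
  move=> e0.
  have [K1 [cK1 kK1 K1L m1K1]] := compact_avoiding_null_set m1 cD dD mL m1L _ e0.
  have [K2 [cK2 kK2 K2L m2K2]] := compact_avoiding_null_set m2 cD dD mL m2L _ e0.
  have [|I [infI finI]] := rare (K1 `|` K2) (compactU kK1 kK2).
    by rewrite setIUl K1L K2L setU0.
  have mC (K : set X) : closed K -> measurable (~` K : set (borel X)).
    by move=> cK; apply: open_borel_measurable; exact: closed_openC.
  have cK : closed (K1 `|` K2) by exact: closedU.
  exists (K1 `|` K2), I; split => //.
  - apply: le_trans _ m1K1; apply: le_measure; rewrite ?inE; [exact: mC.. |].
    by apply: subsetC; exact: subsetUl.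
  - apply: le_trans _ m2K2; apply: le_measure; rewrite ?inE; [exact: mC.. |].
    by apply: subsetC; exact: subsetUr.
have [N [mN m21 m12]] := Hahn_decomposition_finite_measures m1 m2.
exists N; split => //.
- apply: (dominated_null cT2 cT1 m2T2 m1T1) => // e.
  move=> /smallK[K [I [? ? ? ? finI]]].
  by exists K, I; split => // x; rewrite joint_visitsC.
- exact: (dominated_null cT1 cT2 m1T1 m2T2 _ (measurableC mN)).
Qed.
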